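(* Let $\mathcal H$ be a separable complex Hilbert space and $\mathcal L_0$ a complete reflexive subspace lattice on $\mathcal H$. Let $\mathcal L$ be either $\mathcal L_{n_0}$ (for some integer $n_0\ge2$) or $\mathcal L_\infty$, as defined in the context. Then $\mathrm{R_1}(\operatorname{Alg}\mathcal L)\subset\mathrm{I_d}(\operatorname{Alg}\mathcal L)$ if and only if $\mathrm{R_1}(\operatorname{Alg}\mathcal L_0)\subset\mathrm{I_d}(\operatorname{Alg}\mathcal L_0)$.
   Context: A subspace lattice is a family of closed subspaces containing $\{0\}$ and the whole space, closed under arbitrary closed linear spans ($\vee$) and intersections ($\wedge$); subspaces are identified with orthogonal projections. $\operatorname{Alg}\mathcal L=\{A:AE\subset E\ \forall E\in\mathcal L\}$; $\mathcal L$ is reflexive if it equals the lattice of closed subspaces invariant under all of $\operatorname{Alg}\mathcal L$. For an algebra $\mathcal A$ of operators, $\mathrm{I_d}(\mathcal A)$ is the linear span of the idempotent operators in $\mathcal A$ and $\mathrm{R_1}(\mathcal A)$ is the linear span of the rank-one operators in $\mathcal A$. Construction: for $n_0\ge2$, $\mathcal K_{n_0}=\mathcal H^{(n_0)}$; $\zeta=(a_1,\dots,a_{n_0})\in\mathbb C^{n_0}$ a unit vector with all $a_i\ne0$; $Q_\zeta$ the orthogonal projection onto $\{(a_1x,\dots,a_{n_0}x):x\in\mathcal H\}$; $E_{ij}$ the matrix units of $M_{n_0}(\mathbb C)$, $F_k=\sum_{j=1}^kE_{jj}\otimes I$; $\mathcal L_{n_0}$ is the subspace lattice on $\mathcal K_{n_0}$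 generated by $\{E_{11}\otimes P,Q_\zeta,F_k:P\in\mathcal L_0,2\le k\le n_0\}$. Also $\mathcal K_\infty=\ell^2(\mathbb N)\otimes\mathcal H$; $\eta=(b_1,b_2,\dots)\in\ell^2(\mathbb N)$ a unit vector with all $b_n\ne0$; $Q_\eta$ the orthogonal projection onto $\{(b_1x,b_2x,\dots):x\in\mathcal H\}$; $E_{ij}$ the matrix units of $\mathcal B(\ell^2(\mathbb N))$, $F_k=\sum_{j=1}^kE_{jj}\otimes I$; $\mathcal L_\infty$ is the subspace lattice on $\mathcal K_\infty$ generated by $\{E_{11}\otimes P,Q_\eta,F_k:P\in\mathcal L_0,k\ge2\}$. *)

From HB Require Import structures.
From mathcomp Require Import all_boot all_order all_algebra.
From mathcomp Require Import boolp classical_sets functions reals.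
From mathcomp Require Export complex.
Set Implicit Arguments. Unset Strict Implicit. Unset Printing Implicit Defensive.
Import Order.TTheory GRing.Theory Num.Theory.
Local Open Scope ring_scope.
Local Open Scope classical_set_scope.

Section Hilbert.
Variable R : realType.
Local Notation C := (R[i]).
Variable V : lmodType C.
Variable ip : V -> V -> C.

Definition ip_norm (x : V) : R := Num.sqrt (complex.Re (ip x x)).

Definition is_inner_product : Prop :=
  [/\ forall a x y z, ip (a *: x + y) z = a * ip x z + ip y z,
      forall x y, ip y x = conjc (ip x y),
      forall x, 0 <= complex.Re (ip x x) &
      forall x, ip x x = 0 -> x = 0].

Definition ip_complete : Prop :=
  forall u : nat -> V,
    (forall e : R, 0 < e -> exists N, forall m n, (N <= m)%N -> (N <= n)%N ->
        ip_norm (u m - u n) < e) ->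
    exists l, forall e : R, 0 < e -> exists N, forall n, (N <= n)%N ->
        ip_norm (u n - l) < e.

Definition ip_separable : Prop :=
  exists d : nat -> V, forall x (e : R), 0 < e -> exists n, ip_norm (x - d n) < e.

Definition complex_hilbert_space : Prop :=
  [/\ is_inner_product, ip_complete & ip_separable].
End Hilbert.

(* Generic notions on a normed space given by a carrier K (an lmodType over  *)
(* C), a domain D : set K (the vectors of the space; setT for H and H^(n),   *)
(* the square-summable sequences for l^2(N) (x) H) and a norm nrm.           *)
(* Closed subspaces are identified with orthogonal projections (as in the    *)
(* paper), so we work with the subspaces themselves.  Operators are maps     *)
(* K -> K, considered on D only (equality of operators = equality on D).     *)
Section Generic.
Variable R : realType.
Local Notation C := (R[i]).
Variable K : lmodType C.
Variable D : set K.
Variable nrm : K -> R.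

Definition norm_cvg (u : nat -> K) (l : K) : Prop :=
  forall e : R, 0 < e -> exists N, forall n, (N <= n)%N -> nrm (u n - l) < e.

Definition closed_subspace (E : set K) : Prop :=
  [/\ E `<=` D, E 0,
      (forall (a : C) x y, E x -> E y -> E (a *: x + y)) &
      forall (u : nat -> K) l, (forall n, E (u n)) -> D l -> norm_cvg u l -> E l].

Definition cspan (F : set (set K)) : set K :=
  [set x | D x /\ forall M, closed_subspace M -> (forall E, F E -> E `<=` M) -> M x].

(* intersection of a family of subspaces (the whole space for the empty family) *)
Definition cmeet (F : set (set K)) : set K :=
  [set x | D x /\ forall E, F E -> E x].

Definition subspace_lattice (L : set (set K)) : Prop :=
  [/\ (forall E, L E -> closed_subspace E),
      L [set 0], L D,
      (forall F, F `<=` L -> L (cspan F)) &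
      (forall F, F `<=` L -> L (cmeet F))].

Definition complete_subspace_lattice (L : set (set K)) : Prop :=
  subspace_lattice L /\
  (forall F, F `<=` L -> L (cspan F)) /\ (forall F, F `<=` L -> L (cmeet F)).

Definition lattice_gen (G : set (set K)) : set (set K) :=
  [set E | forall L, subspace_lattice L -> G `<=` L -> L E].

Definition bounded_op (A : K -> K) : Prop :=
  [/\ forall x, D x -> D (A x),
      forall (a : C) x y, D x -> D y -> A (a *: x + y) = a *: A x + A y &
      exists M : R, forall x, D x -> nrm (A x) <= M * nrm x].

Definition Alg (L : set (set K)) : set (K -> K) :=
  [set A | bounded_op A /\ forall E, L E -> forall x, E x -> E (A x)].

Definition Lat (S : set (K -> K)) : set (set K) :=
  [set E | closed_subspace E /\ forall A, S A -> forall x, E x -> E (A x)].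

Definition reflexive_lattice (L : set (set K)) : Prop := Lat (Alg L) = L.

Definition idempotent_op (A : K -> K) : Prop := forall x, D x -> A (A x) = A x.

Definition rank_one_op (A : K -> K) : Prop :=
  exists y, [/\ D y, y != 0, (forall x, D x -> exists c : C, A x = c *: y) &
                 exists x, D x /\ A x != 0].

Definition in_op_span (S : set (K -> K)) (B : K -> K) : Prop :=
  exists s : seq (C * (K -> K)), (forall p, p \in s -> S p.2) /\
    forall x, D x -> B x = \sum_(p <- s) p.1 *: p.2 x.

Definition Id_span (A : set (K -> K)) := in_op_span (A `&` idempotent_op).
Definition R1_span (A : set (K -> K)) := in_op_span (A `&` rank_one_op).

Definition R1_sub_Id (A : set (K -> K)) : Prop :=
  forall B, R1_span A B -> Id_span A B.
End Generic.

Section Constructions.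
Variable R : realType.
Local Notation C := (R[i]).
Variable V : lmodType C.
Variable nrmH : V -> R.

(* K_{n0} = H^(n0), vectors x : 'I_n0 -> V *)
Definition Kn_norm (n0 : nat) (x : 'I_n0 -> V) : R :=
  Num.sqrt (\sum_(i < n0) nrmH (x i) ^+ 2).

(* K_oo = l^2(N) (x) H = square-summable sequences in H *)
Definition l2_partial (x : nat -> V) : set R :=
  [set \sum_(n < N) nrmH (x n) ^+ 2 | N in [set: nat]].
Definition Kinf_dom : set (nat -> V) := [set x | has_ubound (l2_partial x)].
Definition Kinf_norm (x : nat -> V) : R := Num.sqrt (sup (l2_partial x)).

Variable L0 : set (set V).

(* generators of L_{n0}: E_11 (x) P (P in L0), Q_zeta, F_k (2 <= k <= n0).
   Coordinates are 0-indexed: coordinate 0 is the range of E_11, and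
   F_k is the set of x supported on coordinates 0..k-1. *)
Definition gens_n (n0 : nat) (a : 'I_n0 -> C) : set (set ('I_n0 -> V)) :=
  [set E | (exists P, L0 P /\
              E = [set x | forall i : 'I_n0, if (i == 0 :> nat) then P (x i) else x i = 0])
         \/ E = [set x | exists h : V, forall i, x i = a i *: h]
         \/ (exists k, (2 <= k <= n0)%N /\
              E = [set x | forall i : 'I_n0, (k <= i)%N -> x i = 0])].

Definition L_n (n0 : nat) (a : 'I_n0 -> C) : set (set ('I_n0 -> V)) :=
  lattice_gen [set: 'I_n0 -> V] (@Kn_norm n0) (gens_n a).

Definition gens_inf (b : nat -> C) : set (set (nat -> V)) :=
  [set E | (exists P, L0 P /\
              E = [set x | Kinf_dom x /\ P (x 0%N) /\ forall i, i != 0%N -> x i = 0])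
         \/ E = [set x | exists h : V, forall i, x i = b i *: h]
         \/ (exists k, (2 <= k)%N /\
              E = [set x | forall i, (k <= i)%N -> x i = 0])].

Definition L_inf (b : nat -> C) : set (set (nat -> V)) :=
  lattice_gen Kinf_dom Kinf_norm (gens_inf b).
End Constructions.

Definition series_to (R : realType) (u : nat -> R) (l : R) : Prop :=
  forall e : R, 0 < e -> exists N, forall M, (N <= M)%N -> `|\sum_(n < M) u n - l| < e.

Definition unit_vec_fin (R : realType) (n0 : nat) (a : 'I_n0 -> R[i]) : Prop :=
  \sum_(i < n0) complex.Re (`|a i| ^+ 2) = 1.

Definition unit_vec_l2 (R : realType) (b : nat -> R[i]) : Prop :=
  series_to (fun n => complex.Re (`|b n| ^+ 2)) 1.

(* Alg L consists of the bounded operators leaving invariant the generators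
   E_11 (x) P (P in L0), Q and F_k of L.  An operator B of Alg L0 lifts to the
   operator of Alg L sending x to the vector with first coordinate
   B x_1 - (a_1 / a_2) B x_2 and all others 0, which kills Q.  Lifting
   preserves rank one and idempotence and is undone by compression to the first
   coordinate, so decompositions of rank-one operators pass from Alg L to
   Alg L0.  Conversely, up to the lift of a rank-one operator of Alg L0, a
   rank-one operator of Alg L is some g (x) u of Alg L with g vanishing on the
   first coordinate.  The generators on which g does not vanish then have a
   least element, and any vector z of it with g z = 1 makes
   g (x) u = g (x) (z + u - (g u) z) + (g u - 1) g (x) z a combination of two
   idempotents of Alg L. *)

From Pilot Require Import Defs.
From HB Require Import structures.
From mathcomp Require Import all_boot all_order all_algebra.
From mathcomp Require Import boolp classical_sets functions reals complex.
From mathcomp Require Import ring lra.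
Import Order.TTheory GRing.Theory Num.Theory Normc.
Local Open Scope ring_scope.
Local Open Scope classical_set_scope.
Set Implicit Arguments. Unset Strict Implicit. Unset Printing Implicit Defensive.

Lemma normc_ge0 (R : rcfType) (a : R[i]) : 0 <= normc a.
Proof. by case: a => x y; apply: sqrtr_ge0. Qed.

Lemma normr_normc (R : rcfType) (a : R[i]) : `|a| = ((normc a)%:C)%C.
Proof. by case: a. Qed.

Lemma normcN1 (R : rcfType) : normc (-1 : R[i]) = 1.
Proof. by rewrite (normcN (1 : R[i])) normc1. Qed.

Lemma fun_scale_addE (S : pzRingType) (V : lmodType S) (T : Type) a (x y : T -> V) t :
  (a *: x + y) t = a *: x t + y t.
Proof. by []. Qed.

Section InnerProduct.
Variable R : realType.
Local Notation C := R[i].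
Variable V : lmodType C.
Variable ip : V -> V -> C.
Hypothesis ipP : is_inner_product ip.
Local Notation nH := (ip_norm ip).

Lemma ip0l z : ip 0 z = 0.
Proof. by case: ipP => lin _ _ _; have := lin (-1) 0 0 z; rewrite scaler0 addr0 mulN1r addNr. Qed.

Lemma ipZl a x z : ip (a *: x) z = a * ip x z.
Proof. by case: ipP => lin _ _ _; have := lin a x 0 z; rewrite !addr0 ip0l addr0. Qed.

Lemma ipDl x y z : ip (x + y) z = ip x z + ip y z.
Proof. by case: ipP => lin _ _ _; have := lin 1 x y z; rewrite scale1r mul1r. Qed.

Lemma ipNl x z : ip (- x) z = - ip x z.
Proof. by rewrite -scaleN1r ipZl mulN1r. Qed.

Lemma ipJ x y : ip y x = (ip x y)^*%C.
Proof. by case: ipP. Qed.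

Lemma ipZr a x z : ip z (a *: x) = a^*%C * ip z x.
Proof. by rewrite ipJ ipZl rmorphM /= -ipJ. Qed.

Lemma ipDr x y z : ip z (x + y) = ip z x + ip z y.
Proof. by rewrite ipJ ipDl rmorphD /= -!ipJ. Qed.

Lemma ipNr x z : ip z (- x) = - ip z x.
Proof. by rewrite ipJ ipNl rmorphN /= -ipJ. Qed.

Lemma ipxx_real x : ip x x = ((complex.Re (ip x x))%:C)%C.
Proof.
move: (ipJ x x); case: (ip x x) => a b /= [] b_opp.
suff -> : b = 0 by [].
have : b *+ 2 = 0 by rewrite mulr2n {1}b_opp addNr.
by move/eqP; rewrite mulrn_eq0 /= => /eqP.
Qed.

Lemma ip_norm_ge0 x : 0 <= nH x.
Proof. exact: sqrtr_ge0. Qed.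

Lemma ip_norm_sqr x : nH x ^+ 2 = complex.Re (ip x x).
Proof. by rewrite sqr_sqrtr //; case: ipP. Qed.

Lemma ip_norm_eq0 x : nH x = 0 -> x = 0.
Proof.
move=> nx0; case: ipP => _ _ _; apply.
by rewrite ipxx_real -ip_norm_sqr nx0 expr0n.
Qed.

Lemma ip_normZ a x : nH (a *: x) = normc a * nH x.
Proof.
have Re_ip_ax : complex.Re (ip (a *: x) (a *: x)) = normc a ^+ 2 * complex.Re (ip x x).
  by rewrite ipZl ipZr mulrA -sqr_normc normr_normc ipxx_real -rmorphXn -rmorphM.
by rewrite /ip_norm Re_ip_ax sqrtrM ?sqrtr_sqr ?ger0_norm ?normc_ge0 ?exprn_ge0 ?normc_ge0.
Qed.

Lemma ip_normN x : nH (- x) = nH x.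
Proof. by rewrite -scaleN1r ip_normZ normcN1 mul1r. Qed.

Lemma ip_norm0 : nH 0 = 0.
Proof. by rewrite -(scale0r 0) ip_normZ normc0 mul0r. Qed.

Lemma ip_normD_sqr x y : nH (x + y) ^+ 2 <= 2 * nH x ^+ 2 + 2 * nH y ^+ 2.
Proof.
have parallelogram : ip (x + y) (x + y) + ip (x - y) (x - y) = 2 * ip x x + 2 * ip y y.
  by rewrite !ipDl !ipDr !ipNl !ipNr opprK; ring.
have Re2 (z : C) : complex.Re (2 * z) = 2 * complex.Re z by rewrite mulr_natl raddfMn mulr_natl.
have := congr1 (@complex.Re R) parallelogram; rewrite !raddfD /= !Re2 -!ip_norm_sqr.
by have := sqr_ge0 (nH (x - y)); lra.
Qed.

Lemma ip_normD_le x y : nH (x + y) <= 2 * (nH x + nH y).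
Proof.
have := ip_normD_sqr x y; have := ip_norm_ge0 (x + y).
have := ip_norm_ge0 x; have := ip_norm_ge0 y; rewrite !expr2; nra.
Qed.

Lemma norm_cvg_unique u l l' : norm_cvg nH u l -> norm_cvg nH u l' -> l = l'.
Proof.
move=> ul ul'; apply/eqP; rewrite -subr_eq0; apply/eqP/ip_norm_eq0.
apply/eqP; rewrite eq_le ip_norm_ge0 andbT leNgt; apply/negP => d_gt0.
have e_gt0 : 0 < nH (l - l') / 8 by rewrite divr_gt0.
have [N1 N1P] := ul _ e_gt0; have [N2 N2P] := ul' _ e_gt0.
have := N1P _ (leq_maxl N1 N2); have := N2P _ (leq_maxr N1 N2).
set m := maxn N1 N2 => l'_close l_close.
have := ip_normD_le (u m - l') (- (u m - l)).
rewrite ip_normN opprB addrC addrA subrK; lra.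
Qed.

Lemma norm_cvgZ (k : C) v l : norm_cvg nH v l -> norm_cvg nH (fun n => k *: v n) (k *: l).
Proof.
move=> vl e e_gt0; have k_ge0 := normc_ge0 k.
have e'_gt0 : 0 < e / (normc k + 1) by rewrite divr_gt0 // ltr_pwDr.
have [N NP] := vl _ e'_gt0; exists N => n Nn.
rewrite -scalerBr ip_normZ; have := NP n Nn; rewrite ltr_pdivlMr ?ltr_pwDr //.
by have := ip_norm_ge0 (v n - l); nra.
Qed.

End InnerProduct.

Section NormedDomain.
Variable R : realType.
Local Notation C := R[i].
Variable K : lmodType C.
Variable D : set K.
Variable nrm : K -> R.

(* No triangle inequality is assumed: limits are only ever compared in H. *)
Record normed_domain : Prop := NormedDomain {
  dom0 : D 0;
  domP : forall a x y, D x -> D y -> D (a *: x + y);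
  nrm_ge0 : forall x, 0 <= nrm x;
  nrm_eq0 : forall x, D x -> nrm x = 0 -> x = 0;
  nrmZ : forall a x, D x -> nrm (a *: x) = normc a * nrm x }.

Hypothesis ND : normed_domain.

Lemma domD x y : D x -> D y -> D (x + y).
Proof. by move=> Dx Dy; have := domP ND 1 Dx Dy; rewrite scale1r. Qed.

Lemma domZ a x : D x -> D (a *: x).
Proof. by move=> Dx; have := domP ND a Dx (dom0 ND); rewrite addr0. Qed.

Lemma domB x y : D x -> D y -> D (x - y).
Proof. by move=> Dx Dy; apply: domD => //; rewrite -scaleN1r; apply: domZ. Qed.

Lemma nrmN x : D x -> nrm (- x) = nrm x.
Proof. by move=> Dx; rewrite -scaleN1r (nrmZ ND) // normcN1 mul1r. Qed.

Section ClosedSubspace.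
Variable E : set K.
Hypothesis closedE : closed_subspace D nrm E.

Lemma cs_dom x : E x -> D x. Proof. by case: closedE => + _ _ _; apply. Qed.
Lemma cs0 : E 0. Proof. by case: closedE. Qed.
Lemma csP a x y : E x -> E y -> E (a *: x + y). Proof. by case: closedE => _ _ + _; apply. Qed.
Lemma csD x y : E x -> E y -> E (x + y).
Proof. by move=> Ex Ey; have := csP 1 Ex Ey; rewrite scale1r. Qed.
Lemma csZ a x : E x -> E (a *: x).
Proof. by move=> Ex; have := csP a Ex cs0; rewrite addr0. Qed.
Lemma csB x y : E x -> E y -> E (x - y).
Proof. by move=> Ex Ey; apply: csD => //; rewrite -scaleN1r; apply: csZ. Qed.
Lemma csZV a x : a != 0 -> E (a *: x) -> E x.
Proof. by move=> a0 Eax; have := csZ a^-1 Eax; rewrite scalerA mulVf // scale1r. Qed.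
End ClosedSubspace.

Lemma closed_subspaceT : closed_subspace D nrm D.
Proof. by split=> //; [exact: dom0 ND | exact: domP ND]. Qed.

Lemma closed_subspace_zero : closed_subspace D nrm [set 0].
Proof.
split=> [x -> | | a x y /= -> -> | u l u0 Dl ul]; first exact: dom0 ND.
- by [].
- by rewrite scaler0 addr0.
apply: (nrm_eq0 ND) => //; apply/eqP; rewrite eq_le (nrm_ge0 ND) andbT leNgt.
apply/negP => /ul[N /(_ N (leqnn N))].
by rewrite u0 sub0r nrmN // ltxx.
Qed.

Lemma cspan_closed F : closed_subspace D nrm (cspan D nrm F).
Proof.
split=> [x [] // | | a x y [Dx xF] [Dy yF] | u l uF Dl ul].
- by split=> [|M closedM _]; [exact: dom0 ND | exact: cs0].
- split=> [|M closedM FM]; first exact: domP.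
  by apply: csP => //; [exact: xF | exact: yF].
split=> // M closedM FM; case: (closedM) => _ _ _ Mlim.
by apply: (Mlim u) => // n; case: (uF n) => _; apply.
Qed.

Lemma cmeet_closed F : (forall E, F E -> closed_subspace D nrm E) ->
  closed_subspace D nrm (cmeet D F).
Proof.
move=> closedF.
split=> [x [] // | | a x y [Dx xF] [Dy yF] | u l uF Dl ul].
- by split=> [|E FE]; [exact: dom0 ND | exact: (cs0 (closedF _ FE))].
- by split=> [|E FE]; [exact: domP | apply: csP; [exact: closedF | exact: xF | exact: yF]].
split=> // E FE; case: (closedF E FE) => _ _ _ Elim.
by apply: (Elim u) => // n; case: (uF n) => _; apply.
Qed.

Section BoundedOperator.
Variable A : K -> K.
Hypothesis boundedA : bounded_op D nrm A.

Lemma op_dom x : D x -> D (A x). Proof. by case: boundedA => + _ _; apply. Qed.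
Lemma opP a x y : D x -> D y -> A (a *: x + y) = a *: A x + A y.
Proof. by case: boundedA => _ + _; apply. Qed.
Lemma op0 : A 0 = 0.
Proof.
have := opP (-1) (dom0 ND) (dom0 ND).
by rewrite scaler0 addr0 scaleN1r addNr.
Qed.
Lemma opZ a x : D x -> A (a *: x) = a *: A x.
Proof. by move=> Dx; have := opP a Dx (dom0 ND); rewrite !addr0 op0 addr0. Qed.
Lemma opB x y : D x -> D y -> A (x - y) = A x - A y.
Proof.
move=> Dx Dy; have := opP (-1) Dy Dx.
by rewrite !scaleN1r ![- _ + _]addrC.
Qed.
Lemma op_bound : exists2 M, 0 <= M & forall x, D x -> nrm (A x) <= M * nrm x.
Proof.
case: boundedA => _ _ [M AM]; exists `|M| => // x Dx.
by apply: le_trans (AM x Dx) _; rewrite ler_wpM2r ?(nrm_ge0 ND) ?ler_norm.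
Qed.
End BoundedOperator.

Lemma closed_subspace_preimage A M : bounded_op D nrm A -> closed_subspace D nrm M ->
  closed_subspace D nrm [set y | D y /\ M (A y)].
Proof.
move=> boundedA closedM.
split=> [x [] // | | a x y [Dx Mx] [Dy My] | u l uM Dl ul].
- by split; [exact: dom0 ND | rewrite op0 //; exact: cs0].
- by split; [exact: domP | rewrite opP //; exact: csP].
split=> //; case: (closedM) => _ _ _ Mlim.
apply: (Mlim (fun n => A (u n))) => [n | |]; first by case: (uM n).
  exact: op_dom.
have [Mb Mb_ge0 AMb] := op_bound boundedA.
move=> e e_gt0; have e'_gt0 : 0 < e / (Mb + 1) by rewrite divr_gt0 // ltr_pwDr.
have [N NP] := ul _ e'_gt0; exists N => n Nn.
have Dun : D (u n) by case: (uM n).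
rewrite -opB //; apply: le_lt_trans (AMb _ (domB Dun Dl)) _.
have := NP n Nn; have := nrm_ge0 ND (u n - l).
by rewrite ltr_pdivlMr ?ltr_pwDr //; nra.
Qed.

(* The subspaces invariant under a bounded operator form a subspace lattice. *)
Lemma Alg_lattice_genP G A : (forall E, G E -> closed_subspace D nrm E) ->
  Alg D nrm (lattice_gen D nrm G) A <->
  bounded_op D nrm A /\ forall E, G E -> forall x, E x -> E (A x).
Proof.
move=> closedG; split=> [[boundedA AL] | [boundedA AG]].
  by split=> // E GE; apply: AL => L _; apply.
split=> // E LE; suff [_ LatA] : Lat D nrm [set A] E by move=> x; exact: LatA.
apply: LE => [| E' GE']; last by split; [exact: closedG | move=> _ -> x; exact: AG].
split=> [E' [] // | | | F FLat | F FLat].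
- by split; [exact: closed_subspace_zero | move=> _ -> x ->; rewrite op0].
- by split; [exact: closed_subspaceT | move=> _ -> x; exact: op_dom].
- split=> [|_ -> x [Dx xF]]; first exact: cspan_closed.
  split=> [|M closedM FM]; first exact: op_dom.
  have closed_pre := closed_subspace_preimage boundedA closedM.
  suff [] : [set y | D y /\ M (A y)] x by [].
  apply: xF => // E' FE' y E'y; have [closedE' E'A] := FLat _ FE'.
  by split; [exact: cs_dom E'y | apply: FM FE' _ (E'A _ _ _ _)].
- split=> [|_ -> x [Dx xF]]; first by apply: cmeet_closed => E' /FLat[].
  split; first exact: op_dom.
  by move=> E' FE'; case: (FLat _ FE') => _; apply=> //; exact: xF.
Qed.

End NormedDomain.

Lemma ip_normed_domain (R : realType) (V : lmodType R[i]) (ip : V -> V -> R[i]) :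
  is_inner_product ip -> normed_domain [set: V] (ip_norm ip).
Proof.
move=> ipP; split=> // [x | x _ | a x _]; first exact: ip_norm_ge0.
  exact: ip_norm_eq0.
exact: ip_normZ.
Qed.

Section RankOne.
Variable R : realType.
Local Notation C := R[i].
Variable K : lmodType C.
Variable D : set K.
Variable nrm : K -> R.
Hypothesis ND : normed_domain D nrm.

Definition lin_form (g : K -> C) :=
  forall a x y, D x -> D y -> g (a *: x + y) = a * g x + g y.

Definition bounded_form (g : K -> C) :=
  exists M, forall x, D x -> normc (g x) <= M * nrm x.

Section LinearForm.
Variable g : K -> C.
Hypothesis lin_g : lin_form g.

Lemma lin_form0 : g 0 = 0.
Proof.
have := lin_g (-1) (dom0 ND) (dom0 ND).
by rewrite scaler0 addr0 mulN1r addNr.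
Qed.
Lemma lin_formZ a x : D x -> g (a *: x) = a * g x.
Proof. by move=> Dx; have := lin_g a Dx (dom0 ND); rewrite !addr0 lin_form0 addr0. Qed.
Lemma lin_formD x y : D x -> D y -> g (x + y) = g x + g y.
Proof. by move=> Dx Dy; have := lin_g 1 Dx Dy; rewrite scale1r mul1r. Qed.
End LinearForm.

Definition rank1 (g : K -> C) (w : K) : K -> K := fun x => g x *: w.

Lemma rank1_bounded g w : D w -> lin_form g -> bounded_form g ->
  bounded_op D nrm (rank1 g w).
Proof.
move=> Dw lin_g [M gM]; split=> [x _ | a x y Dx Dy | ]; first exact: (domZ ND).
  by rewrite /rank1 lin_g // scalerDl scalerA.
exists (M * nrm w) => x Dx; rewrite /rank1 (nrmZ ND) // mulrAC.
by rewrite ler_wpM2r ?(nrm_ge0 ND) ?gM.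
Qed.

Lemma rank1_idempotent g w : D w -> lin_form g -> g w = 1 ->
  Defs.idempotent_op D (rank1 g w).
Proof. by move=> Dw lin_g gw1 x Dx; rewrite /rank1 lin_formZ // gw1 mulr1. Qed.

Lemma rank_one_op_factor B : bounded_op D nrm B -> rank_one_op D B ->
  exists u g, [/\ D u, u != 0, lin_form g, bounded_form g
                & forall x, D x -> B x = g x *: u] /\ exists2 x, D x & g x != 0.
Proof.
move=> boundedB [u [Du u0 Bu [x0 [Dx0 Bx0]]]].
pose g x := xget 0 [set c | B x = c *: u].
have Bg x : D x -> B x = g x *: u by move=> Dx; have := xgetPex 0 (Bu x Dx).
have scaleuI c1 c2 : c1 *: u = c2 *: u -> c1 = c2.
  by move/eqP; rewrite -subr_eq0 -scalerBl scaler_eq0 (negbTE u0) orbF subr_eq0 => /eqP.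
have nrm_u_gt0 : 0 < nrm u.
  rewrite lt_neqAle (nrm_ge0 ND) andbT eq_sym; apply/eqP => /(nrm_eq0 ND Du) u_eq0.
  by rewrite u_eq0 eqxx in u0.
exists u, g; split; last by exists x0 => //; apply: contra Bx0 => /eqP g0; rewrite Bg // g0 scale0r.
split=> // [a x y Dx Dy |].
  apply: scaleuI; rewrite -Bg; last exact: (domP ND).
  by rewrite (opP boundedB) // !Bg // scalerDl scalerA.
have [M _ BM] := op_bound ND boundedB; exists (M / nrm u) => x Dx.
by have := BM x Dx; rewrite Bg // (nrmZ ND) // mulrAC ler_pdivlMr.
Qed.

Section OperatorSpan.
Variable S : set (K -> K).

Lemma in_op_span_ext B1 B : in_op_span D S B1 -> (forall x, D x -> B x = B1 x) ->
  in_op_span D S B.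
Proof. by move=> [s [sS B1s]] BB1; exists s; split=> // x Dx; rewrite BB1 // B1s. Qed.

Lemma in_op_span0 B : (forall x, D x -> B x = 0) -> in_op_span D S B.
Proof. by move=> B0; exists [::]; split=> // x Dx; rewrite big_nil B0. Qed.

Lemma in_op_span1 E : S E -> in_op_span D S E.
Proof.
move=> SE; exists [:: (1, E)]; split=> [p | x _]; first by rewrite inE => /eqP ->.
by rewrite big_seq1 scale1r.
Qed.

Lemma in_op_spanD B1 B2 B : in_op_span D S B1 -> in_op_span D S B2 ->
  (forall x, D x -> B x = B1 x + B2 x) -> in_op_span D S B.
Proof.
move=> [s1 [s1S B1s]] [s2 [s2S B2s]] BB; exists (s1 ++ s2); split.
  by move=> p; rewrite mem_cat => /orP[/s1S | /s2S].
by move=> x Dx; rewrite BB // B1s // B2s // big_cat.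
Qed.

Lemma in_op_spanZ c B1 B : in_op_span D S B1 -> (forall x, D x -> B x = c *: B1 x) ->
  in_op_span D S B.
Proof.
move=> [s [sS B1s]] BB; exists [seq (c * p.1, p.2) | p <- s]; split.
  by move=> p /mapP[q /sS Sq ->].
move=> x Dx; rewrite BB // B1s // big_map scaler_sumr.
by apply: eq_bigr => p _; rewrite scalerA.
Qed.

Lemma in_op_span_sum (s : seq (C * (K -> K))) B :
  (forall p, p \in s -> in_op_span D S p.2) ->
  (forall x, D x -> B x = \sum_(p <- s) p.1 *: p.2 x) -> in_op_span D S B.
Proof.
elim: s B => [|p s IH] B sS Bs.
  by apply: in_op_span0 => x Dx; rewrite Bs // big_nil.
apply: (@in_op_spanD (fun x => p.1 *: p.2 x) (fun x => \sum_(q <- s) q.1 *: q.2 x)).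
- exact: in_op_spanZ (sS p (mem_head _ _)) _.
- by apply: IH => // q qs; apply: sS; rewrite inE qs orbT.
by move=> x Dx; rewrite Bs // big_cons.
Qed.
End OperatorSpan.

Lemma R1_sub_Id_rank_one (A : set (K -> K)) :
  (forall B, A B -> rank_one_op D B -> Id_span D A B) -> R1_sub_Id D A.
Proof.
move=> AId B [s [sR1 Bs]]; apply: in_op_span_sum Bs => p ps.
by have [Ap rank1p] := sR1 p ps; exact: AId.
Qed.

Definition relevant (g : K -> C) (E : set K) := exists2 z, E z & g z != 0.

Variable G : set (set K).
Hypothesis closedG : forall E, G E -> closed_subspace D nrm E.
Local Notation L := (lattice_gen D nrm G).

Lemma rank1_Alg g x : D x -> lin_form g -> bounded_form g ->
  (forall E, G E -> relevant g E -> E x) -> Alg D nrm L (rank1 g x).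
Proof.
move=> Dx lin_g bounded_g x_relevant.
apply/(Alg_lattice_genP ND _ closedG); split; first exact: rank1_bounded.
move=> E GE z Ez; have [gz0 | gz_neq0] := eqVneq (g z) 0.
  by rewrite /rank1 gz0 scale0r; exact: cs0 (closedG GE).
by rewrite /rank1; apply: (csZ (closedG GE)); apply: x_relevant => //; exists z.
Qed.

Lemma rank1_Id_span u g z : D u -> lin_form g -> bounded_form g ->
  (forall E x, G E -> E x -> E (g x *: u)) ->
  D z -> g z != 0 -> (forall E, G E -> relevant g E -> E z) ->
  Id_span D (Alg D nrm L) (rank1 g u).
Proof.
move=> Du lin_g bounded_g guG Dz gz0 z_relevant.
pose w := (g z)^-1 *: z; pose w' := w + u - g u *: w.
have Dw : D w by exact: (domZ ND).
have gw1 : g w = 1 by rewrite (lin_formZ lin_g) // mulVf.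
have Dw' : D w' by apply: (domB ND); [exact: (domD ND) | exact: (domZ ND)].
have gw'1 : g w' = 1.
  have Dwu := domD ND Dw Du.
  rewrite /w' addrC -scaleNr lin_g // (lin_formD lin_g) // gw1 mulr1.
  by rewrite addrC addrK.
have w_relevant E : G E -> relevant g E -> E w.
  by move=> GE /(z_relevant _ GE) Ez; exact: (csZ (closedG GE)).
have w'_relevant E : G E -> relevant g E -> E w'.
  move=> GE relE; have closedE := closedG GE.
  have Eu : E u by case: relE => x Ex gx0; apply: (csZV closedE gx0); exact: guG Ex.
  have Ew := w_relevant _ GE relE.
  by apply: (csB closedE); [exact: (csD closedE) | exact: (csZ closedE)].
apply: (in_op_spanD (B1 := rank1 g w') (B2 := fun x => (g u - 1) *: rank1 g w x)).
- by apply: in_op_span1; split; [exact: rank1_Alg | exact: rank1_idempotent].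
- apply: (in_op_spanZ (B1 := rank1 g w)) => //.
  by apply: in_op_span1; split; [exact: rank1_Alg | exact: rank1_idempotent].
move=> x Dx; rewrite /rank1 /w' scalerA mulrBl mul1r scalerBl !scalerDr scalerN !scalerA.
by rewrite [g u * _]mulrC addrA subrK addrC addKr.
Qed.

End RankOne.

Section Coordinates.
Variable R : realType.
Local Notation C := R[i].
Variable V : lmodType C.
Variable ip : V -> V -> C.
Hypothesis ipP : is_inner_product ip.
Local Notation nH := (ip_norm ip).
Let NV := ip_normed_domain ipP.

Variable J : eqType.
Variable idx : J -> nat.
Variables i0 i1 : J.
Hypothesis i10 : i1 != i0.
Variable D : set (J -> V).
Variable nrm : (J -> V) -> R.
Hypothesis ND : normed_domain D nrm.
Hypothesis nrm_coord : forall x i, D x -> nH (x i) <= nrm x.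

Definition e0 (v : V) : J -> V := fun i => if i == i0 then v else 0.
Hypothesis e0_dom : forall v, D (e0 v).
Hypothesis nrm_e0 : forall v, nrm (e0 v) = nH v.

Variable beta : J -> C.
Hypothesis beta_neq0 : forall i, beta i != 0.
Local Notation c := (beta i0 / beta i1).
Variable L0 : set (set V).
Hypothesis closedL0 : forall P, L0 P -> closed_subspace [set: V] nH P.
Hypothesis L0T : L0 [set: V].
Variable kset : set nat.
Hypothesis kset_gt : forall k, kset k -> (idx i0 < k)%N.

(* The ranges of E_11 (x) P, of Q_zeta (or Q_eta) and of F_k; [idx i] is the
   position of the coordinate [i], and [i0], [i1] are the first two. *)
Definition E11 (P : set V) : set (J -> V) :=
  [set x | D x /\ P (x i0) /\ forall i, i != i0 -> x i = 0].
Definition Qset : set (J -> V) := [set x | exists h, forall i, x i = beta i *: h].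
Definition Fset (k : nat) : set (J -> V) := [set x | forall i, (k <= idx i)%N -> x i = 0].
Hypothesis Qset_dom : Qset `<=` D.
Hypothesis Fset_dom : forall k, kset k -> Fset k `<=` D.

Definition gens : set (set (J -> V)) :=
  [set E | (exists P, L0 P /\ E = E11 P) \/ E = Qset \/ exists k, kset k /\ E = Fset k].
Local Notation L := (lattice_gen D nrm gens).

Lemma gens_E11 P : L0 P -> gens (E11 P). Proof. by left; exists P. Qed.
Lemma gens_Qset : gens Qset. Proof. by right; left. Qed.
Lemma gens_Fset k : kset k -> gens (Fset k). Proof. by right; right; exists k. Qed.

Lemma e0P a v w : e0 (a *: v + w) = a *: e0 v + e0 w.
Proof.
by apply/funext => i; rewrite fun_scale_addE /e0; case: (i == i0); rewrite ?scaler0 ?addr0.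
Qed.
Lemma e00 : e0 0 = 0.
Proof. by apply/funext => i; rewrite /e0; case: (i == i0). Qed.
Lemma e0Z a v : e0 (a *: v) = a *: e0 v.
Proof. by have := e0P a v 0; rewrite !addr0 e00 addr0. Qed.
Lemma e0D v w : e0 (v + w) = e0 v + e0 w.
Proof. by have := e0P 1 v w; rewrite !scale1r. Qed.
Lemma e0_sum (T : Type) (s : seq T) (F : T -> V) :
  e0 (\sum_(p <- s) F p) = \sum_(p <- s) e0 (F p).
Proof. exact: (big_morph e0 e0D e00). Qed.
Lemma e0_i0 v : e0 v i0 = v. Proof. by rewrite /e0 eqxx. Qed.
Lemma e0_i1 v : e0 v i1 = 0. Proof. by rewrite /e0 (negbTE i10). Qed.

Lemma E11_e0 P x : E11 P x -> x = e0 (x i0).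
Proof. by case=> _ [_ x0]; apply/funext => i; rewrite /e0; case: eqP => [-> | /eqP /x0]. Qed.
Lemma E11_mem P v : P v -> E11 P (e0 v).
Proof. by move=> Pv; split; rewrite ?e0_i0 //; split=> // i /negbTE; rewrite /e0 => ->. Qed.
Lemma Fset_e0 k v : kset k -> Fset k (e0 v).
Proof.
by move=> /kset_gt k_gt i ki; rewrite /e0; case: eqP => // ii0; rewrite -ii0 ltnNge ki in k_gt.
Qed.
Lemma Qset_c z : Qset z -> z i0 = c *: z i1.
Proof. by case=> h zh; rewrite !zh scalerA divfK. Qed.

Lemma norm_cvg_coord u l i : (forall n, D (u n)) -> D l -> norm_cvg nrm u l ->
  norm_cvg nH (fun n => u n i) (l i).
Proof.
move=> Du Dl ul e e_gt0; have [N NP] := ul e e_gt0; exists N => n Nn.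
exact: le_lt_trans (nrm_coord i (domB ND (Du n) Dl)) (NP n Nn).
Qed.

Lemma norm_cvg_coord0 u l i : (forall n, D (u n)) -> D l -> norm_cvg nrm u l ->
  (forall n, u n i = 0) -> l i = 0.
Proof.
move=> Du Dl ul u0; apply: (norm_cvg_unique ipP (norm_cvg_coord i Du Dl ul)).
by move=> e e_gt0; exists 0%N => n _; rewrite u0 subrr ip_norm0.
Qed.

Lemma E11_closed P : closed_subspace [set: V] nH P -> closed_subspace D nrm (E11 P).
Proof.
move=> closedP; split=> [x [] // | | a x y [Dx [Px x0]] [Dy [Py y0]] | u l uE Dl ul].
- by split; [exact: dom0 ND | split; [exact: cs0 closedP |]].
- split; first exact: (domP ND _ Dx Dy).
  split=> [|i ii0]; first exact: (csP closedP).
  by rewrite fun_scale_addE x0 // y0 // scaler0 addr0.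
have Du n : D (u n) by case: (uE n).
split=> //; split=> [|i ii0].
  case: closedP => _ _ _ Plim; apply: (Plim (fun n => u n i0)) => // [n |].
    by case: (uE n) => _ [].
  exact: norm_cvg_coord.
by apply: norm_cvg_coord0 Dl ul _ => // n; case: (uE n) => _ [_]; apply.
Qed.

Lemma Qset_closed : closed_subspace D nrm Qset.
Proof.
split=> // [| a x y [h1 xh1] [h2 yh2] | u l uQ Dl ul].
- by exists 0 => i; rewrite scaler0.
- by exists (a *: h1 + h2) => i; rewrite fun_scale_addE xh1 yh2 scalerDr !scalerA mulrC.
have Du n : D (u n) by exact: Qset_dom.
exists ((beta i0)^-1 *: l i0) => i; rewrite scalerA.
apply: (norm_cvg_unique ipP (norm_cvg_coord i Du Dl ul)).
have -> : (fun n => u n i) = (fun n => (beta i / beta i0) *: u n i0).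
  by apply/funext => n; have [h uh] := uQ n; rewrite !uh scalerA divfK.
exact/(norm_cvgZ ipP)/norm_cvg_coord.
Qed.

Lemma Fset_closed k : kset k -> closed_subspace D nrm (Fset k).
Proof.
move=> kk; split=> // [| a x y Fx Fy i ki | u l uF Dl ul i ki]; first exact: Fset_dom.
  by rewrite fun_scale_addE Fx // Fy // scaler0 addr0.
by apply: norm_cvg_coord0 Dl ul _ => [n | n]; [exact: Fset_dom (uF n) | exact: uF].
Qed.

Lemma gens_closed E : gens E -> closed_subspace D nrm E.
Proof.
case=> [[P [L0P ->]] | [-> | [k [kk ->]]]]; [exact/E11_closed/closedL0 | exact: Qset_closed |].
exact: Fset_closed.
Qed.

Lemma Alg_invariant B E x : Alg D nrm L B -> gens E -> E x -> E (B x).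
Proof. by case=> _ BL GE; apply: BL => // L' _; apply. Qed.

Definition lift (B : V -> V) : (J -> V) -> J -> V := fun x => e0 (B (x i0) - c *: B (x i1)).

Definition compress (B : (J -> V) -> J -> V) : V -> V := fun h => B (e0 h) i0.

Section Lift.
Variable B : V -> V.
Hypothesis boundedB : bounded_op [set: V] nH B.

Lemma lift_e0 h : lift B (e0 h) = e0 (B h).
Proof. by rewrite /lift e0_i0 e0_i1 (op0 NV boundedB) scaler0 subr0. Qed.

Lemma lift_bounded : bounded_op D nrm (lift B).
Proof.
split=> [x _ | a x y Dx Dy | ]; first exact: e0_dom.
  rewrite /lift !fun_scale_addE !(opP boundedB) // -e0P; congr e0.
  by rewrite scalerDr !scalerBr !scalerA [c * a]mulrC opprD addrACA.
have [M M_ge0 BM] := op_bound NV boundedB.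
exists (2 * M * (1 + normc c)) => x Dx; rewrite /lift nrm_e0.
have := ip_normD_le ipP (B (x i0)) (- (c *: B (x i1))).
rewrite (ip_normN ipP) (ip_normZ ipP) => B_le.
have Bi_le i : nH (B (x i)) <= M * nrm x.
  by apply: le_trans (BM _ I) _; rewrite ler_wpM2l ?nrm_coord.
have := Bi_le i0; have := Bi_le i1; have := normc_ge0 c.
have := ip_norm_ge0 ip (B (x i1)); nra.
Qed.

Lemma lift_idempotent : Defs.idempotent_op [set: V] B -> Defs.idempotent_op D (lift B).
Proof.
by move=> idemB x _; rewrite {2}/lift lift_e0 /lift (opB boundedB) // (opZ NV boundedB) // !idemB.
Qed.

Lemma lift_rank_one : rank_one_op [set: V] B -> rank_one_op D (lift B).
Proof.
case=> y [_ y0 By [x0 [_ Bx0]]]; exists (e0 y); split=> //.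
- by apply: contra_neq y0 => e0y0; rewrite -(e0_i0 y) e0y0.
- move=> x _; rewrite /lift.
  have [c0 ->] := By (x i0) I; have [c1 ->] := By (x i1) I.
  by exists (c0 - c * c1); rewrite scalerA -scalerBl e0Z.
exists (e0 x0); split; first exact: e0_dom.
by rewrite lift_e0; apply: contra_neq Bx0 => e0B0; rewrite -(e0_i0 (B x0)) e0B0.
Qed.

Lemma lift_Alg : Alg [set: V] nH L0 B -> Alg D nrm L (lift B).
Proof.
case=> _ BL0; apply/(Alg_lattice_genP ND _ gens_closed); split; first exact: lift_bounded.
move=> E [[P [L0P ->]] | [-> | [k [kk ->]]]] z.
- move=> Ez; rewrite (E11_e0 Ez) lift_e0; apply: E11_mem; apply: BL0 => //.
  by case: Ez => _ [].
- by move=> Qz; rewrite /lift Qset_c // (opZ NV boundedB) // subrr e00; exact: cs0 Qset_closed.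
by move=> _; exact: Fset_e0.
Qed.
End Lift.

Lemma lift_Id_span B : Id_span [set: V] (Alg [set: V] nH L0) B -> Id_span D (Alg D nrm L) (lift B).
Proof.
case=> s [sId Bs]; exists [seq (p.1, lift p.2) | p <- s]; split.
  move=> p /mapP[q /sId[Aq idemq] ->] /=.
  by split; [exact: (lift_Alg Aq.1 Aq) | exact: (lift_idempotent Aq.1 idemq)].
move=> x _; rewrite big_map /lift !Bs //.
under eq_bigr do rewrite -e0Z; rewrite -e0_sum scaler_sumr -sumrB; congr e0.
by apply: eq_bigr => p _; rewrite scalerBr !scalerA mulrC.
Qed.

Lemma compress_Alg B : Alg D nrm L B -> Alg [set: V] nH L0 (compress B).
Proof.
move=> AB; have [M M_ge0 BM] := op_bound ND AB.1; split.
  split=> // [a x y _ _ | ]; first by rewrite /compress e0P (opP AB.1).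
  exists M => h _; apply: le_trans (nrm_coord _ (op_dom AB.1 (e0_dom h))) _.
  by rewrite -nrm_e0; exact: BM.
move=> P L0P h Ph; have [_ [] //] : E11 P (B (e0 h)).
exact: Alg_invariant AB (gens_E11 L0P) (E11_mem Ph).
Qed.

Lemma compress_idempotent B : Alg D nrm L B -> Defs.idempotent_op D B ->
  Defs.idempotent_op [set: V] (compress B).
Proof.
move=> AB idemB h _; have E11B : E11 [set: V] (B (e0 h)).
  exact: Alg_invariant AB (gens_E11 L0T) (E11_mem (I : [set: V] h)).
by rewrite /compress -(E11_e0 E11B) idemB.
Qed.

Lemma R1_sub_Id_compress : R1_sub_Id D (Alg D nrm L) -> R1_sub_Id [set: V] (Alg [set: V] nH L0).
Proof.
move=> R1IdL; apply: R1_sub_Id_rank_one => B AB rank1B.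
have [s [sId liftBs]] : Id_span D (Alg D nrm L) (lift B).
  by apply/R1IdL/in_op_span1; split; [exact: lift_Alg AB.1 AB | exact: lift_rank_one AB.1 rank1B].
exists [seq (p.1, compress p.2) | p <- s]; split.
  move=> p /mapP[q /sId[Aq idemq] ->] /=.
  by split; [exact: compress_Alg | exact: compress_idempotent].
move=> h _; rewrite big_map -[B h]e0_i0 -(lift_e0 AB.1) liftBs // fct_sumE.
by apply: eq_bigr.
Qed.

Lemma Qset_sub_Fset u k : Qset u -> u != 0 -> Fset k u -> Qset `<=` Fset k.
Proof.
move=> [h uh] u0 Fu x _ i ki; case/negP: u0; apply/eqP/funext => j.
have /eqP : beta i *: h = 0 by rewrite -uh Fu.
by rewrite scaler_eq0 (negbTE (beta_neq0 i)) => /eqP h0; rewrite uh h0 scaler0.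
Qed.

(* The relevant generators have a least element: [Qset] if it is relevant, the
   relevant [Fset k] of least index otherwise. *)
Lemma common_relevant_vector g u : lin_form D g -> (forall h, g (e0 h) = 0) ->
  u != 0 -> (forall E x, gens E -> E x -> E (g x *: u)) ->
  (exists2 x, D x & g x != 0) ->
  exists z, [/\ D z, g z != 0 & forall E, gens E -> relevant g E -> E z].
Proof.
move=> lin_g g_e0 u0 guG [x0 Dx0 gx0].
have E11_irrelevant P : ~ relevant g (E11 P) by case=> z /E11_e0 ->; rewrite g_e0 eqxx.
have relevant_u E : gens E -> relevant g E -> E u.
  by move=> GE [z Ez gz0]; apply: (csZV (gens_closed GE) gz0); exact: guG Ez.
have [[z Qz gz0] | Q_irrelevant] := pselect (relevant g Qset).
  exists z; split=> // [|E [[P [_ ->]] /E11_irrelevant // | [-> // | [k [kk ->]] relF]]].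
    exact: Qset_dom.
  have Qu := relevant_u _ gens_Qset (ex_intro2 _ _ z Qz gz0).
  have Fu := relevant_u _ (gens_Fset kk) relF.
  exact: Qset_sub_Fset Qu u0 Fu _ Qz.
pose relevantF k := `[< kset k /\ relevant g (Fset k) >].
have [[k Fk] | F_irrelevant] := pselect (exists k, relevantF k).
  have [k0 /asboolP[kk0 [z Fz gz0]] k0_min] := ex_minnP (ex_intro relevantF k Fk).
  exists z; split=> // [|E].
    exact: Fset_dom kk0 _ Fz.
  case=> [[P [_ ->]] /E11_irrelevant // | [-> /Q_irrelevant // | [k' [kk' ->]] relF]].
  move=> i k'i; apply: Fz; apply: leq_trans k'i; apply: k0_min.
  by apply/asboolP.
exists x0; split=> // E [[P [_ ->]] /E11_irrelevant // | [-> /Q_irrelevant // | [k [kk ->]] relF]].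
by case: F_irrelevant; exists k; apply/asboolP.
Qed.

Lemma Id_span_rank1_e0_null g u : D u -> lin_form D g -> bounded_form D nrm g ->
  (forall h, g (e0 h) = 0) -> (forall E x, gens E -> E x -> E (g x *: u)) ->
  Id_span D (Alg D nrm L) (rank1 g u).
Proof.
move=> Du lin_g bounded_g g_e0 guG.
have [u0 | u_neq0] := eqVneq u 0.
  by apply: in_op_span0 => x _; rewrite /rank1 u0 scaler0.
have [g_neq0 | g0] := pselect (exists2 x, D x & g x != 0).
  have [z [Dz gz0 z_relevant]] := common_relevant_vector lin_g g_e0 u_neq0 guG g_neq0.
  exact: (rank1_Id_span ND gens_closed Du lin_g bounded_g guG Dz gz0 z_relevant).
apply: in_op_span0 => x Dx; rewrite /rank1.
by have [-> | gx0] := eqVneq (g x) 0; [exact: scale0r | case: g0; exists x].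
Qed.

(* [g x = residual g x + g (e0 (x i0 - c *: x i1))], the second term being the
   part of [g] that factors through [lift]. *)
Definition residual (g : (J -> V) -> C) (x : J -> V) :=
  g x - g (e0 (x i0)) + c * g (e0 (x i1)).

Section Residual.
Variable g : (J -> V) -> C.
Hypothesis lin_g : lin_form D g.

Lemma residual_lin : lin_form D (residual g).
Proof.
move=> a x y Dx Dy; rewrite /residual !fun_scale_addE !e0P !lin_g //; ring.
Qed.

Lemma residual_e0 h : residual g (e0 h) = 0.
Proof. by rewrite /residual e0_i0 e0_i1 e00 (lin_form0 ND lin_g) mulr0 addr0 subrr. Qed.

Lemma residual_bounded : bounded_form D nrm g -> bounded_form D nrm (residual g).
Proof.
case=> M gM; exists (`|M| * (2 + normc c)) => x Dx.
have g_le y : D y -> normc (g y) <= `|M| * nrm y.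
  by move=> Dy; apply: le_trans (gM y Dy) _; rewrite ler_wpM2r ?(nrm_ge0 ND) ?ler_norm.
have ge0_le i : normc (g (e0 (x i))) <= `|M| * nrm x.
  by apply: le_trans (g_le _ (e0_dom _)) _; rewrite nrm_e0 ler_wpM2l ?nrm_coord.
have := le_normcD (g x - g (e0 (x i0))) (c * g (e0 (x i1))).
have := le_normcD (g x) (- g (e0 (x i0))).
rewrite normcN normcM /residual; have := g_le x Dx; have := ge0_le i0; have := ge0_le i1.
have := normc_ge0 c; have := normc_ge0 (g (e0 (x i1))); have := normr_ge0 M; nra.
Qed.

Lemma residual_invariant u : u = e0 (u i0) ->
  (forall E x, gens E -> E x -> E (g x *: u)) ->
  forall E x, gens E -> E x -> E (residual g x *: u).
Proof.
move=> u_e0 guG E x GE; case: (GE) => [[P [L0P ->]] | [-> | [k [kk ->]]]].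
- move=> E11x; have x1 : x i1 = 0 by case: E11x => _ [_]; apply.
  rewrite /residual x1 e00 (lin_form0 ND lin_g) mulr0 addr0 -(E11_e0 E11x) subrr scale0r.
  exact: cs0 (E11_closed (closedL0 L0P)).
- move=> Qx; rewrite /residual Qset_c // e0Z (lin_formZ ND lin_g) // subrK.
  exact: guG gens_Qset Qx.
by move=> _; rewrite u_e0 -e0Z; exact: Fset_e0.
Qed.
End Residual.

Lemma compressed_rank1_Alg g u : lin_form D g -> bounded_form D nrm g ->
  (forall E x, gens E -> E x -> E (g x *: u)) ->
  Alg [set: V] nH L0 (rank1 (g \o e0) (u i0)).
Proof.
move=> lin_g [M gM] guG; split.
  apply: (rank1_bounded NV) => // [a v w _ _ | ]; first by rewrite /= e0P lin_g.
  by exists M => v _; rewrite /= -nrm_e0; exact: gM.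
move=> P L0P v Pv; have [_ []] := guG _ _ (gens_E11 L0P) (E11_mem Pv).
by rewrite /rank1.
Qed.

Lemma R1_sub_Id_lift : R1_sub_Id [set: V] (Alg [set: V] nH L0) -> R1_sub_Id D (Alg D nrm L).
Proof.
move=> R1IdL0; apply: R1_sub_Id_rank_one => B AB /(rank_one_op_factor ND AB.1).
case=> u [g [[Du u0 lin_g bounded_g Bg] _]].
have guG E x : gens E -> E x -> E (g x *: u).
  move=> GE Ex; rewrite -Bg; last exact: (cs_dom (gens_closed GE) Ex).
  exact: Alg_invariant AB GE Ex.
apply: (in_op_span_ext (B1 := rank1 g u)) => [|x Dx]; last exact: Bg.
have [g_e0 | /existsNP[h0 /eqP gh0]] := pselect (forall h, g (e0 h) = 0).
  exact: Id_span_rank1_e0_null.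
have u_e0 : u = e0 (u i0).
  apply: (E11_e0 (P := [set: V])); apply: (csZV (E11_closed (closedL0 L0T)) gh0).
  exact: guG (gens_E11 L0T) (E11_mem (I : [set: V] h0)).
have Id_compressed : Id_span [set: V] (Alg [set: V] nH L0) (rank1 (g \o e0) (u i0)).
  have ui0 : u i0 != 0 by apply: contra_neq u0 => ui0; rewrite u_e0 ui0 e00.
  apply/R1IdL0/in_op_span1; split; first exact: compressed_rank1_Alg.
  exists (u i0); split=> // [v _ | ]; first by exists (g (e0 v)).
  by exists h0; split=> //; rewrite /rank1 scaler_eq0 negb_or gh0.
apply: (in_op_spanD (B1 := rank1 (residual g) u) (B2 := lift (rank1 (g \o e0) (u i0)))).
- apply: Id_span_rank1_e0_null => //.
  + exact: residual_lin.
  + exact: residual_bounded.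
  + exact: residual_e0.
  + exact: residual_invariant.
- exact: lift_Id_span.
move=> x Dx; rewrite /rank1 /lift /residual /= scalerA -scalerBl e0Z -u_e0 -scalerDl.
by congr (_ *: _); ring.
Qed.

Theorem R1_sub_Id_transfer :
  R1_sub_Id D (Alg D nrm L) <-> R1_sub_Id [set: V] (Alg [set: V] nH L0).
Proof. by split; [exact: R1_sub_Id_compress | exact: R1_sub_Id_lift]. Qed.

End Coordinates.

Section DirectSum.
Variable R : realType.
Local Notation C := R[i].
Variable V : lmodType C.
Variable ip : V -> V -> C.
Hypothesis ipP : is_inner_product ip.
Local Notation nH := (ip_norm ip).
Variable n0 : nat.
Hypothesis n0_gt1 : (1 < n0)%N.
Local Notation Kn := (@Kn_norm R V nH n0).

Let i0 : 'I_n0 := Ordinal (ltnW n0_gt1).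
Let i1 : 'I_n0 := Ordinal n0_gt1.

Lemma Kn_normed_domain : normed_domain [set: 'I_n0 -> V] Kn.
Proof.
have sq_ge0 (x : 'I_n0 -> V) i : 0 <= nH (x i) ^+ 2 by rewrite exprn_ge0 ?ip_norm_ge0.
split=> // [x | x _ /eqP | a x _]; first exact: sqrtr_ge0.
  rewrite sqrtr_eq0 => sum_le0; apply/funext => i; apply: (ip_norm_eq0 ipP).
  have sum0 : \sum_(j < n0) nH (x j) ^+ 2 = 0.
    by apply/eqP; rewrite eq_le sum_le0 sumr_ge0 // => j _.
  by apply/eqP; rewrite -sqrf_eq0 (psumr_eq0P (fun j _ => sq_ge0 x j) sum0).
rewrite /Kn_norm (eq_bigr (fun i => normc a ^+ 2 * nH (x i) ^+ 2)); last first.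
  by move=> i _; rewrite (ip_normZ ipP) exprMn.
by rewrite -mulr_sumr sqrtrM ?exprn_ge0 ?normc_ge0 // sqrtr_sqr ger0_norm ?normc_ge0.
Qed.

Lemma Kn_norm_coord x i : nH (x i) <= Kn x.
Proof.
rewrite -(ger0_norm (ip_norm_ge0 ip (x i))) -sqrtr_sqr; apply: ler_wsqrtr.
by rewrite (bigD1 i) //= lerDl sumr_ge0 // => j _; rewrite exprn_ge0 ?ip_norm_ge0.
Qed.

Lemma Kn_norm_e0 v : Kn (e0 i0 v) = nH v.
Proof.
rewrite /Kn_norm (bigD1 i0) //= big1 ?addr0 => [|i /negbTE ii0].
  by rewrite e0_i0 sqrtr_sqr ger0_norm ?ip_norm_ge0.
by rewrite /e0 ii0 (ip_norm0 ipP) expr0n.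
Qed.

Variable L0 : set (set V).
Hypothesis closedL0 : forall P, L0 P -> closed_subspace [set: V] nH P.
Hypothesis L0T : L0 [set: V].
Variable a : 'I_n0 -> C.
Hypothesis a_neq0 : forall i, a i != 0.

Lemma gens_nE : gens_n L0 a =
  gens (@nat_of_ord n0) i0 [set: 'I_n0 -> V] a L0 [set k | (2 <= k <= n0)%N].
Proof.
have E11E P : [set x : 'I_n0 -> V | forall i : 'I_n0, if (i == 0 :> nat) then P (x i) else x i = 0]
    = E11 i0 [set: 'I_n0 -> V] P.
  apply/seteqP; split=> x.
    move=> xP; split=> //; split=> [|i /eqP ii0]; first exact: xP i0.
    by have := xP i; case: eqP => // i_eq0; case: ii0; exact: val_inj.
  move=> [_ [Px0 x0]] i; case: eqP => [i_eq0 | /eqP i_neq0].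
    by rewrite (_ : i = i0) //; exact: val_inj.
  by apply: x0; apply: contra i_neq0 => /eqP ->.
apply/funext => E; apply/propext; rewrite /gens_n /gens /=.
by split=> [[[P [L0P ->]] | EQ] | [[P [L0P ->]] | EQ]];
  [left; exists P; rewrite E11E | right | left; exists P; rewrite E11E | right].
Qed.

Lemma R1_sub_Id_L_n : R1_sub_Id [set: 'I_n0 -> V] (Alg [set: 'I_n0 -> V] Kn (L_n nH L0 a))
  <-> R1_sub_Id [set: V] (Alg [set: V] nH L0).
Proof.
rewrite /L_n gens_nE.
apply: (R1_sub_Id_transfer ipP (i0 := i0) (i1 := i1)) => //; first exact: Kn_normed_domain.
- by move=> x i _; exact: Kn_norm_coord.
- exact: Kn_norm_e0.
- by move=> k /andP[/ltnW].
Qed.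

End DirectSum.

Section PartialSums.
Variable R : realType.
Variable f : nat -> R.
Hypothesis f_ge0 : forall n, 0 <= f n.

Lemma partial_sum_le N M : (N <= M)%N -> \sum_(n < N) f n <= \sum_(n < M) f n.
Proof. by move=> NM; rewrite -(subnKC NM) big_split_ord /= lerDl sumr_ge0. Qed.

Lemma partial_sum_le_support k N : (forall n, (k <= n)%N -> f n = 0) ->
  \sum_(n < N) f n <= \sum_(n < k) f n.
Proof.
move=> f0; have [Nk | kN] := leqP N k; first exact: partial_sum_le.
rewrite -(subnKC (ltnW kN)) big_split_ord /= [X in _ + X]big1 ?addr0 // => i _.
by apply: f0; exact: leq_addr.
Qed.

Lemma series_to_partial_le l : series_to f l -> forall N, \sum_(n < N) f n <= l + 1.
Proof.
move=> fl N; have [N1 N1P] := fl 1 ltr01.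
apply: le_trans (partial_sum_le (leq_maxl N N1)) _.
have := N1P _ (leq_maxr N N1); set S := \sum_(n < _) f n => S_near.
by have := ler_norm (S - l); lra.
Qed.
End PartialSums.

Section SquareSummable.
Variable R : realType.
Local Notation C := R[i].
Variable V : lmodType C.
Variable ip : V -> V -> C.
Hypothesis ipP : is_inner_product ip.
Local Notation nH := (ip_norm ip).
Local Notation D := (Kinf_dom nH).
Local Notation nrm := (Kinf_norm nH).
Local Notation psum x N := (\sum_(n < N) nH (x n) ^+ 2).

Lemma sq_ip_norm_ge0 (x : nat -> V) n : 0 <= nH (x n) ^+ 2.
Proof. by rewrite exprn_ge0 ?ip_norm_ge0. Qed.

Lemma Kinf_dom_ub (x : nat -> V) M : (forall N, psum x N <= M) -> D x.
Proof. by move=> xM; exists M => _ [N _ <-]. Qed.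

Lemma psum_le_sup (x : nat -> V) N : D x -> psum x N <= sup (l2_partial nH x).
Proof. by move=> Dx; apply: (ub_le_sup Dx); exists N. Qed.

Lemma sup_l2_partial_le (x : nat -> V) M : (forall N, psum x N <= M) -> sup (l2_partial nH x) <= M.
Proof.
by move=> xM; apply: ge_sup => [|_ [N _ <-]]; [exists (psum x 0); exists 0%N | exact: xM].
Qed.

Lemma psumZ a (x : nat -> V) N : psum (a *: x) N = normc a ^+ 2 * psum x N.
Proof. by rewrite mulr_sumr; apply: eq_bigr => n _; rewrite (ip_normZ ipP) exprMn. Qed.

Lemma Kinf_domZ a (x : nat -> V) : D x -> D (a *: x).
Proof.
move=> Dx; apply: (Kinf_dom_ub (M := normc a ^+ 2 * sup (l2_partial nH x))) => N.
by rewrite psumZ ler_wpM2l ?exprn_ge0 ?normc_ge0 ?psum_le_sup.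
Qed.

Lemma sup_l2_partialZ a (x : nat -> V) : D x ->
  sup (l2_partial nH (a *: x)) = normc a ^+ 2 * sup (l2_partial nH x).
Proof.
move=> Dx; have a2_ge0 : 0 <= normc a ^+ 2 by rewrite exprn_ge0 ?normc_ge0.
apply/eqP; rewrite eq_le; apply/andP; split.
  by apply: sup_l2_partial_le => N; rewrite psumZ ler_wpM2l ?psum_le_sup.
have [a2_0 | a2_neq0] := eqVneq (normc a ^+ 2) 0.
  by rewrite a2_0 mul0r; apply: le_trans (psum_le_sup 0 (Kinf_domZ a Dx)); rewrite big_ord0.
have a2_gt0 : 0 < normc a ^+ 2 by rewrite lt_neqAle eq_sym a2_neq0.
rewrite mulrC -ler_pdivlMr //; apply: sup_l2_partial_le => N.
by rewrite ler_pdivlMr // mulrC -psumZ; exact: psum_le_sup (Kinf_domZ a Dx).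
Qed.

Lemma Kinf_normed_domain : normed_domain D nrm.
Proof.
split=> [| a x y Dx Dy | x | x Dx /eqP | a x Dx].
- apply: (Kinf_dom_ub (M := 0)) => N.
  by rewrite big1 // => n _; rewrite (ip_norm0 ipP) expr0n.
- apply: (Kinf_dom_ub (M := 2 * sup (l2_partial nH (a *: x)) + 2 * sup (l2_partial nH y))) => N.
  apply: (@le_trans _ _ (2 * psum (a *: x) N + 2 * psum y N)).
    rewrite !mulr_sumr -big_split /=; apply: ler_sum => n _.
    exact: (ip_normD_sqr ipP (a *: x n) (y n)).
  by rewrite lerD // ler_wpM2l // psum_le_sup //; exact: Kinf_domZ.
- exact: sqrtr_ge0.
- rewrite sqrtr_eq0 => sup_le0; apply/funext => n; apply: (ip_norm_eq0 ipP).
  apply/eqP; rewrite -sqrf_eq0 eq_le sq_ip_norm_ge0 andbT.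
  apply: le_trans sup_le0; apply: le_trans (psum_le_sup n.+1 Dx).
  by rewrite big_ord_recr lerDr sumr_ge0 // => i _; exact: sq_ip_norm_ge0.
rewrite /Kinf_norm sup_l2_partialZ // sqrtrM ?exprn_ge0 ?normc_ge0 //.
by rewrite sqrtr_sqr ger0_norm ?normc_ge0.
Qed.

Lemma Kinf_norm_coord (x : nat -> V) i : D x -> nH (x i) <= nrm x.
Proof.
move=> Dx; rewrite -(ger0_norm (ip_norm_ge0 ip (x i))) -sqrtr_sqr; apply: ler_wsqrtr.
apply: le_trans (psum_le_sup i.+1 Dx); rewrite big_ord_recr lerDr sumr_ge0 // => n _.
exact: sq_ip_norm_ge0.
Qed.

Lemma psum_e0 v N : psum (e0 0%N v) N = if N is _.+1 then nH v ^+ 2 else 0.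
Proof.
case: N => [|N]; first by rewrite big_ord0.
by rewrite big_ord_recl big1 ?addr0 // => n _; rewrite /e0 (ip_norm0 ipP) expr0n.
Qed.

Lemma Kinf_dom_e0 v : D (e0 0%N v).
Proof. by apply: (Kinf_dom_ub (M := nH v ^+ 2)) => -[|N]; rewrite psum_e0 ?sqr_ge0. Qed.

Lemma Kinf_norm_e0 v : nrm (e0 0%N v) = nH v.
Proof.
rewrite /Kinf_norm -[nH v]ger0_norm ?ip_norm_ge0 // -sqrtr_sqr; congr Num.sqrt.
apply/eqP; rewrite eq_le; apply/andP; split.
  by apply: sup_l2_partial_le => -[|N]; rewrite psum_e0 ?sqr_ge0.
by have := psum_le_sup 1 (Kinf_dom_e0 v); rewrite psum_e0.
Qed.

Lemma Fset_Kinf_dom k : Fset id k `<=` D.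
Proof.
move=> x xF; apply: (Kinf_dom_ub (M := psum x k)) => N.
apply: (partial_sum_le_support (f := fun n => nH (x n) ^+ 2)) => [n | n kn].
  exact: sq_ip_norm_ge0.
by rewrite xF // (ip_norm0 ipP) expr0n.
Qed.

Lemma Qset_Kinf_dom b : unit_vec_l2 b -> Qset b `<=` D.
Proof.
move=> b_unit x [h xh]; apply: (Kinf_dom_ub (M := nH h ^+ 2 * (1 + 1))) => N.
have b2E n : complex.Re (`|b n| ^+ 2) = normc (b n) ^+ 2 by rewrite normr_normc -rmorphXn.
have b2_ge0 n : 0 <= complex.Re (`|b n| ^+ 2) by rewrite b2E exprn_ge0 ?normc_ge0.
rewrite (eq_bigr (fun n : 'I_N => nH h ^+ 2 * complex.Re (`|b n| ^+ 2))) => [|n _]; last first.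
  by rewrite xh (ip_normZ ipP) exprMn b2E mulrC.
by rewrite -mulr_sumr ler_wpM2l ?sqr_ge0 //; exact: (series_to_partial_le b2_ge0 b_unit).
Qed.

Variable L0 : set (set V).
Hypothesis closedL0 : forall P, L0 P -> closed_subspace [set: V] nH P.
Hypothesis L0T : L0 [set: V].
Variable b : nat -> C.
Hypothesis b_unit : unit_vec_l2 b.
Hypothesis b_neq0 : forall n, b n != 0.

Lemma R1_sub_Id_L_inf : R1_sub_Id D (Alg D nrm (L_inf nH L0 b))
  <-> R1_sub_Id [set: V] (Alg [set: V] nH L0).
Proof.
have -> : L_inf nH L0 b = lattice_gen D nrm (gens id 0%N D b L0 [set k | (2 <= k)%N]) by [].
apply: (R1_sub_Id_transfer ipP (i0 := 0%N) (i1 := 1%N)) => //.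
- exact: Kinf_normed_domain.
- exact: Kinf_norm_coord.
- exact: Kinf_dom_e0.
- exact: Kinf_norm_e0.
- by move=> k /ltnW.
- exact: Qset_Kinf_dom.
by move=> k _; exact: Fset_Kinf_dom.
Qed.

End SquareSummable.

Theorem mainTheorem4 (R : realType) (V : lmodType R[i]) (ip : V -> V -> R[i])
  (HH : complex_hilbert_space ip)
  (L0 : set (set V))
  (HL0c : complete_subspace_lattice [set: V] (ip_norm ip) L0)
  (HL0r : reflexive_lattice [set: V] (ip_norm ip) L0) :
  (forall (n0 : nat) (a : 'I_n0 -> R[i]),
      (2 <= n0)%N -> unit_vec_fin a -> (forall i, a i != 0) ->
      R1_sub_Id [set: 'I_n0 -> V] (Alg [set: 'I_n0 -> V] (@Kn_norm R V (ip_norm ip) n0)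
                                        (L_n (ip_norm ip) L0 a))
      <-> R1_sub_Id [set: V] (Alg [set: V] (ip_norm ip) L0))
  /\
  (forall b : nat -> R[i],
      unit_vec_l2 b -> (forall n, b n != 0) ->
      R1_sub_Id (Kinf_dom (ip_norm ip))
        (Alg (Kinf_dom (ip_norm ip)) (Kinf_norm (ip_norm ip)) (L_inf (ip_norm ip) L0 b))
      <-> R1_sub_Id [set: V] (Alg [set: V] (ip_norm ip) L0)).
Proof.
have [ipP _ _] := HH.
have [[closedL0 _ L0T _ _] _] := HL0c.
split=> [n0 a n0_gt1 _ a_neq0 | b b_unit b_neq0].
  exact: R1_sub_Id_L_n.
exact: R1_sub_Id_L_inf.
Qed.
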